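(* Let $0\le m<M$ and let $n>2$ be an integer. For integers $0\le r\le s<n$ define $$E^{BW,U}_n(r,s)=\sum_{k=r+1}^{s}\frac{M\,r}{(k-1)\,n}+\sum_{k=s+1}^{n}(M+m)\frac{r(s-1)}{(k-1)(k-2)\,n},$$ where any term of the form $0/0$ is interpreted as $0$. Let $(\mathcal{M}_1(n),\mathcal{M}_2(n))$ be a point at which $E^{BW,U}_n$ attains its maximum. Then (i) $\lim_{n\to\infty}\mathcal{M}_1(n)/n=\dfrac{e^{-1+\frac{m}{M}}M}{m+M}$; (ii) $\lim_{n\to\infty}\mathcal{M}_2(n)/n=\dfrac{M}{m+M}$; (iii) $\lim_{n\to\infty}E^{BW,U}_n(\mathcal{M}_1(n),\mathcal{M}_2(n))=\dfrac{e^{-1+\frac{m}{M}}M^2}{m+M}$.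
   Context: $E^{BW,U}_n(r,s)$ is the expected payoff, in the Best-or-Worst secretary problem with $n$ candidates where choosing the overall best pays $M$ and the overall worst pays $m$, of the strategy that rejects the first $r$ candidates, then accepts the first candidate better than all preceding ones up to the $s$-th interview, and afterwards accepts the first candidate better or worse than all preceding ones. *)

From HB Require Import structures.
From mathcomp Require Import all_boot all_order all_algebra.
From mathcomp Require Import all_classical all_reals all_analysis.
Set Implicit Arguments. Unset Strict Implicit. Unset Printing Implicit Defensive.
Import Order.TTheory GRing.Theory Num.Theory.
Local Open Scope ring_scope.

(* Terms 0/0 are 0: in MathComp x / 0 = 0, and whenever a denominator
   vanishes (for r <= s) the numerator vanishes as well. *)
Definition EBWU (R : realType) (m M : R) (n r s : nat) : R :=
  \sum_(r.+1 <= k < s.+1) (M * r%:R / ((k%:R - 1) * n%:R))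
  + \sum_(s.+1 <= k < n.+1)
      ((M + m) * (r%:R * (s%:R - 1)) / ((k%:R - 1) * (k%:R - 2) * n%:R)).

Definition is_maximizer (R : realType) (m M : R) (n r s : nat) : Prop :=
  (r <= s)%N /\ (s < n)%N /\
  forall r' s' : nat, (r' <= s')%N -> (s' < n)%N ->
    EBWU m M n r' s' <= EBWU m M n r s.

From HB Require Import structures.
From mathcomp Require Import all_boot all_order all_algebra.
From mathcomp Require Import all_classical all_reals all_analysis.
From mathcomp Require Import ring lra zify.
Import Order.TTheory GRing.Theory Num.Theory.
Import numFieldNormedType.Exports.
Local Open Scope classical_set_scope.
Local Open Scope ring_scope.

(* Write H(r,s) = 1/r + ... + 1/(s-1) and X_n(s) = (M+m)(s-1)/(n-1) - m
   ([excess]); the second sum of E_n telescopes, so that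
   E_n(r,s) = (r/n) (M H(r,s) + M - X_n(s)).
   At a maximizer (r,s), comparing with (r, s-1) and (r, s+1) puts s within 1
   of M(n-1)/(M+m), hence X_n(s) -> M - m.  Comparing with (r-1, s) and
   (r+1, s) gives M H(r+1,s) <= X_n(s) <= M H(r,s); as e^H(r,s) lies between
   s/r and (s-1)/(r-1), r is within 1 of s e^(-X_n(s)/M).  Finally
   M r <= n E_n(r,s) <= M (r+1), so E_n(r,s) - M r/n -> 0. *)

Section HarmonicSum.
Context {R : realType}.

Definition harmonic_sum (r s : nat) : R := \sum_(r <= j < s) j%:R^-1.

Lemma natrB1_neq0 (k : nat) : (1 < k)%N -> k%:R - 1 != 0 :> R.
Proof. by move=> k_gt1; rewrite subr_eq0 pnatr_eq1 gtn_eqF. Qed.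

Lemma harmonic_sum_recl {r s} :
  (r < s)%N -> harmonic_sum r s = r%:R^-1 + harmonic_sum r.+1 s.
Proof. exact: big_ltn. Qed.

Lemma harmonic_sum_recr {r s} :
  (r <= s)%N -> harmonic_sum r s.+1 = harmonic_sum r s + s%:R^-1.
Proof. exact: big_nat_recr. Qed.

Lemma harmonic_sum_ge0 r s : 0 <= harmonic_sum r s.
Proof. by apply: sumr_ge0 => j _; rewrite invr_ge0. Qed.

(* For [s = 0] this reads [-1 <= 0], since [0^-1 = 0]. *)
Lemma natrB1_expR_inv_le (s : nat) : (s%:R - 1) * expR s%:R^-1 <= s%:R :> R.
Proof.
have [->|s_gt0] := posnP s; first by rewrite invr0 expR0 mulr1; lra.
have s_unit : s%:R != 0 :> R by rewrite pnatr_eq0 -lt0n.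
have -> : s%:R - 1 = s%:R * (1 - s%:R^-1) :> R by rewrite mulrBr mulr1 mulfV.
rewrite -mulrA -[leRHS]mulr1 ler_pM2l ?ltr0n //.
rewrite -[X in _ <= X](expRxMexpNx_1 s%:R^-1) [X in _ <= X]mulrC.
by apply: ler_wpM2r; [exact: expR_ge0 | exact: expR_ge1Dx].
Qed.

Lemma expR_harmonic_sum_ge {r s} :
  (0 < r <= s)%N -> s%:R <= r%:R * expR (harmonic_sum r s).
Proof.
case/andP=> r_gt0 /subnK <-; elim: (s - r)%N => [|k IH].
  by rewrite add0n /harmonic_sum big_geq // expR0 mulr1.
rewrite addSn harmonic_sum_recr ?leq_addl // expRD mulrA.
apply: le_trans (ler_wpM2r (expR_ge0 _) IH).
have kr_gt0 : 0 < (k + r)%:R :> R by rewrite ltr0n addn_gt0 r_gt0 orbT.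
apply: le_trans (ler_wpM2l (ltW kr_gt0) (expR_ge1Dx _)).
by rewrite mulrDr mulr1 mulfV ?gt_eqF // -natr1.
Qed.

Lemma expR_harmonic_sum_le {r s} :
  (r <= s)%N -> (r%:R - 1) * expR (harmonic_sum r s) <= s%:R - 1 :> R.
Proof.
move=> /subnK <-; elim: (s - r)%N => [|k IH].
  by rewrite add0n /harmonic_sum big_geq // expR0 mulr1.
rewrite addSn harmonic_sum_recr ?leq_addl // expRD mulrA.
apply: le_trans (ler_wpM2r (expR_ge0 _) IH) _.
by rewrite -natr1 addrK natrB1_expR_inv_le.
Qed.

Lemma sum_inv_consecutive (n s : nat) : (1 < s <= n)%N ->
  \sum_(s.+1 <= k < n.+1) ((k%:R - 1) * (k%:R - 2))^-1
    = (s%:R - 1)^-1 - (n%:R - 1)^-1 :> R.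
Proof.
case/andP=> s_gt1 s_le_n; rewrite big_add1 /=.
rewrite (telescope_sumr_eq (fun k => - (k%:R - 1)^-1)) ?opprK 1?addrC //.
move=> k /andP[s_le_k _].
have k_gt1 : (1 < k)%N := leq_trans s_gt1 s_le_k.
have k_neq0 : k%:R != 0 :> R by rewrite pnatr_eq0 gtn_eqF // ltnW.
rewrite -natr1 addrK; have -> : k%:R + 1 - 2 = k%:R - 1 :> R by ring.
by field; rewrite natrB1_neq0 ?k_neq0.
Qed.

End HarmonicSum.

Section Convergence.
Context {R : realType}.

Lemma ler_dist_divr (x y c d : R) :
  0 < d -> `|x * d - y * d| <= c -> `|x - y| <= c / d.
Proof. by move=> d_gt0; rewrite -mulrBl normrM (gtr0_norm d_gt0) ler_pdivlMr. Qed.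

Lemma cvg_invn : (fun n => n%:R^-1 : R) @ \oo --> 0.
Proof. by rewrite -cvg_shiftS; exact: cvg_harmonic. Qed.

Lemma cvg_dist_invn {u v : nat -> R} {l : R} (c : R) :
  (\forall n \near \oo, `|u n - v n| <= c / n%:R) ->
  v @ \oo --> l -> u @ \oo --> l.
Proof.
move=> uv_near v_l.
have c_invn : (fun n => c / n%:R) @ \oo --> 0.
  by rewrite -(mulr0 c); apply: cvgM (cvg_cst c) cvg_invn.
apply: (squeeze_cvgr (f := fun n => v n - c / n%:R) (h := fun n => v n + c / n%:R)).
- by apply: filterS uv_near => n /=; rewrite ler_distl.
- by rewrite -[l]subr0; apply: cvgB.
- by rewrite -[l]addr0; apply: cvgD.
Qed.

End Convergence.

Section Payoff.
Context {R : realType}.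
Variables (m M : R).

Definition excess (n s : nat) : R := (M + m) * ((s%:R - 1) / (n%:R - 1)) - m.

Lemma EBWU_factor n r s : EBWU m M n r s = r%:R / n%:R *
  (M * harmonic_sum r s + (M + m) * ((s%:R - 1) *
     \sum_(s.+1 <= k < n.+1) ((k%:R - 1) * (k%:R - 2))^-1)).
Proof.
rewrite /EBWU /harmonic_sum [RHS]mulrDr; congr (_ + _).
  rewrite big_add1 /= !big_distrr /=; apply: eq_bigr => j _.
  by rewrite -natr1 addrK invfM; ring.
rewrite !big_distrr /=; apply: eq_bigr => k _.
by rewrite !invfM; ring.
Qed.

Lemma EBWU_closed n r s : (1 < s <= n)%N ->
  EBWU m M n r s = r%:R / n%:R * (M * harmonic_sum r s + M - excess n s).
Proof.
case/andP=> s_gt1 s_le_n.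
rewrite EBWU_factor sum_inv_consecutive ?s_gt1 //; congr (_ * _).
by rewrite /excess; field; rewrite !natrB1_neq0 // (leq_trans s_gt1).
Qed.

Lemma EBWU_succr n r s : (0 < r < s)%N -> (1 < s <= n)%N ->
  n%:R * EBWU m M n r.+1 s
    = n%:R * EBWU m M n r s + (M * harmonic_sum r.+1 s - excess n s).
Proof.
move=> /andP[r_gt0 r_lt_s] s_bounds.
have n_neq0 : n%:R != 0 :> R by rewrite pnatr_eq0 gtn_eqF //; lia.
rewrite !EBWU_closed // (harmonic_sum_recl r_lt_s) -natr1.
by field; rewrite n_neq0 pnatr_eq0 -lt0n r_gt0.
Qed.

Lemma EBWU_succs n r s : (r <= s)%N -> (1 < s < n)%N ->
  n%:R * EBWU m M n r s.+1
    = n%:R * EBWU m M n r s + r%:R * (M / s%:R - (M + m) / (n%:R - 1)).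
Proof.
move=> r_le_s /andP[s_gt1 s_lt_n].
have n_neq0 : n%:R != 0 :> R by rewrite pnatr_eq0 gtn_eqF //; lia.
have s_bounds : (1 < s <= n)%N by lia.
have s1_bounds : (1 < s.+1 <= n)%N by lia.
rewrite !EBWU_closed // harmonic_sum_recr // /excess -natr1.
by field; rewrite n_neq0 !natrB1_neq0 ?pnatr_eq0 ?gtn_eqF //; lia.
Qed.

End Payoff.

Section Maximizer.
Context {R : realType} {m M : R}.
Hypotheses (m_ge0 : 0 <= m) (m_lt_M : m < M).

Let M_gt0 : 0 < M. Proof. exact: le_lt_trans m_ge0 m_lt_M. Qed.
Let Mm_gt0 : 0 < M + m. Proof. exact: ltr_wpDr. Qed.

Lemma excess_lt_M {n s} : (1 < n)%N -> (s < n)%N -> excess m M n s < M.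
Proof.
move=> n_gt1 s_lt_n; have n1_gt0 : 0 < n%:R - 1 :> R by rewrite subr_gt0 ltr1n.
rewrite /excess ltrBlDr -[X in _ < X]mulr1 ltr_pM2l //.
by rewrite ltr_pdivrMr // mul1r ltrD2r ltr_nat.
Qed.

Context {n r s : nat}.
Hypotheses (n_gt2 : (2 < n)%N) (rs_max : is_maximizer m M n r s).

Let r_le_s : (r <= s)%N. Proof. by case: rs_max. Qed.
Let s_lt_n : (s < n)%N. Proof. by case: rs_max => _ []. Qed.
Let n_gt0 : 0 < n%:R :> R. Proof. by rewrite ltr0n; lia. Qed.
Let n1_gt0 : 0 < n%:R - 1 :> R. Proof. by rewrite subr_gt0 ltr1n; lia. Qed.

Lemma maximizer_neighbour {r' s'} : (r' <= s')%N -> (s' < n)%N ->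
  n%:R * EBWU m M n r' s' <= n%:R * EBWU m M n r s.
Proof. by move=> r's' s'n; rewrite ler_pM2l // (proj2 (proj2 rs_max)). Qed.

Lemma maximizer_gt0 : (0 < r)%N && (1 < s)%N.
Proof.
have E12_gt0 : 0 < EBWU m M n 1 2.
  rewrite EBWU_closed ?(ltnW n_gt2) // /harmonic_sum big_nat1 invr1 mulr1.
  have := excess_lt_M (ltnW n_gt2) n_gt2.
  by move=> X_lt_M; rewrite mulr_gt0 ?divr_gt0 //; have := M_gt0; lra.
have := lt_le_trans (mulr_gt0 n_gt0 E12_gt0) (@maximizer_neighbour 1 2 isT n_gt2).
rewrite EBWU_factor; have [->|r_gt0] := posnP r; first by rewrite !(mul0r, mulr0) ltxx.
rewrite /=; case: (ltnP 1 s) => // s_le1; have [-> ->] : r = 1%N /\ s = 1%N by lia.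
by rewrite subrr mul0r mulr0 addr0 /harmonic_sum big_geq // !mulr0 ltxx.
Qed.

Lemma maximizer_s_lower : M * (n%:R - 1) <= (M + m) * s%:R.
Proof.
have [r_gt0 s_gt1] := andP maximizer_gt0; have := s_lt_n.
rewrite leq_eqVlt => /orP[/eqP s1_eq_n | s1_lt_n].
  rewrite -s1_eq_n -natr1 addrK; apply: ler_wpM2r; first exact: ler0n.
  by rewrite lerDl.
have := maximizer_neighbour (leqW r_le_s) s1_lt_n.
rewrite EBWU_succs ?s_gt1 // gerDl pmulr_rle0 ?ltr0n // subr_le0.
by rewrite ler_pdivrMr ?ltr0n ?(ltn_trans _ s_gt1) // mulrAC ler_pdivlMr.
Qed.

Lemma maximizer_excess_le : excess m M n s <= M * harmonic_sum r s.
Proof.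
have [r_gt0 s_gt1] := andP maximizer_gt0.
have s_bounds : (1 < s <= n)%N by rewrite s_gt1 ltnW.
have [r_eq1 | r_gt1] : r = 1%N \/ (1 < r)%N by lia.
  rewrite r_eq1 harmonic_sum_recl // invr1 mulrDr mulr1.
  have := excess_lt_M (ltnW n_gt2) s_lt_n.
  have := mulr_ge0 (ltW M_gt0) (harmonic_sum_ge0 2 s); lra.
have r1_bounds : (0 < r.-1 < s)%N by lia.
have := EBWU_succr m M _ _ _ r1_bounds s_bounds; rewrite prednK // => step.
have := maximizer_neighbour (leq_trans (leq_pred r) r_le_s) s_lt_n; lra.
Qed.

Lemma maximizer_excess_ge :
  (r < s)%N -> M * harmonic_sum r.+1 s <= excess m M n s.
Proof.
move=> r_lt_s; have [r_gt0 s_gt1] := andP maximizer_gt0.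
have := maximizer_neighbour r_lt_s s_lt_n.
by rewrite EBWU_succr ?r_gt0 ?s_gt1 ?(ltnW s_lt_n) // gerDl subr_le0.
Qed.

Lemma maximizer_s_upper : (M + m) * (s%:R - 1) <= M * (n%:R - 1).
Proof.
have [r_gt0 s_gt1] := andP maximizer_gt0.
have [r_eq_s | r_lt_s] : r = s \/ (r < s)%N by lia.
  have := maximizer_excess_le; rewrite r_eq_s /harmonic_sum big_geq // mulr0.
  rewrite /excess subr_le0 mulrA ler_pdivrMr // => q_le_m.
  apply: le_trans q_le_m _; apply: ler_wpM2r; [exact: ltW | exact: ltW].
have [s_eq2 | s_gt2] : s = 2%N \/ (2 < s)%N by lia.
  rewrite s_eq2 -natr1 addrK mulr1.
  have : M * 2 <= M * (n%:R - 1).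
    by apply: ler_wpM2l; [exact: ltW | rewrite lerBrDr natr1 ler_nat].
  by have := m_lt_M; lra.
have r_le_s1 : (r <= s.-1)%N by lia.
have s1_bounds : (1 < s.-1 < n)%N by lia.
have := maximizer_neighbour r_le_s1 (proj2 (andP s1_bounds)).
rewrite -[in X in _ <= X](prednK (ltnW s_gt1)) (EBWU_succs m M _ _ _ r_le_s1 s1_bounds).
rewrite lerDl pmulr_rge0 ?ltr0n // subr_ge0 -subn1 natrB ?(ltnW s_gt1) //.
by rewrite ler_pdivrMr // mulrAC ler_pdivlMr // subr_gt0 ltr1n.
Qed.

Lemma maximizer_lt_of_excess_gt0 : 0 < excess m M n s -> (r < s)%N.
Proof.
move=> X_gt0; rewrite ltn_neqAle r_le_s andbT; apply/eqP => r_eq_s.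
by have := maximizer_excess_le; rewrite r_eq_s /harmonic_sum big_geq // mulr0; lra.
Qed.

Lemma maximizer_r_upper : (r%:R - 1) * expR (excess m M n s / M) <= s%:R - 1.
Proof.
apply: le_trans _ (expR_harmonic_sum_le r_le_s); apply: ler_wpM2l.
  by rewrite subr_ge0 ler1n; case/andP: maximizer_gt0.
by rewrite ler_expR ler_pdivrMr // mulrC maximizer_excess_le.
Qed.

Lemma maximizer_r_lower :
  (r < s)%N -> s%:R <= (r%:R + 1) * expR (excess m M n s / M).
Proof.
move=> r_lt_s; apply: le_trans (expR_harmonic_sum_ge (r := r.+1) r_lt_s) _.
rewrite -natr1; apply: ler_wpM2l; first by rewrite addr_ge0.
by rewrite ler_expR ler_pdivlMr // mulrC maximizer_excess_ge.
Qed.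

Lemma maximizer_value :
  (r < s)%N -> M * r%:R <= n%:R * EBWU m M n r s <= M * (r%:R + 1).
Proof.
move=> r_lt_s; have [r_gt0 s_gt1] := andP maximizer_gt0.
rewrite EBWU_closed ?s_gt1 ?(ltnW s_lt_n) // mulrA [n%:R * _]mulrC divfK ?gt_eqF //.
have := maximizer_excess_le; have := maximizer_excess_ge r_lt_s.
rewrite (harmonic_sum_recl r_lt_s); set H := harmonic_sum r.+1 s; set X := excess m M n s.
move=> H_le_X X_le_H; apply/andP; split.
  by rewrite [M * _]mulrC; apply: ler_wpM2l; [exact: ler0n | lra].
have -> : r%:R * (M * (r%:R^-1 + H) + M - X) = M + r%:R * M + r%:R * (M * H - X).
  by field; rewrite pnatr_eq0 -lt0n.
have : r%:R * (M * H - X) <= 0 by rewrite mulr_ge0_le0 ?ler0n ?subr_le0.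
by lra.
Qed.

Lemma maximizer_s_between :
  M / (M + m) * (n%:R - 1) <= s%:R <= M / (M + m) * (n%:R - 1) + 1.
Proof.
rewrite -lerBlDr mulrAC ler_pdivrMr // ler_pdivlMr // [_ * (M + m)]mulrC.
by rewrite maximizer_s_lower [_ * (M + m)]mulrC maximizer_s_upper.
Qed.

Lemma maximizer_s_ratio : `|s%:R / n%:R - M / (M + m)| <= 1 / n%:R.
Proof.
apply: ler_dist_divr => //; rewrite divfK ?gt_eqF //.
have b_le1 : M / (M + m) <= 1 by rewrite ler_pdivrMr // mul1r lerDl.
have /andP[] := maximizer_s_between; rewrite mulrBr mulr1 ler_distl.
by have := divr_ge0 (ltW M_gt0) (ltW Mm_gt0); lra.
Qed.

Lemma maximizer_excess_dist :
  `|excess m M n s - (M - m)| <= (M + m) * 2 / n%:R.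
Proof.
have -> : excess m M n s - (M - m)
    = (M + m) * ((s%:R - 1) / (n%:R - 1) - M / (M + m)).
  by rewrite /excess; field; rewrite !gt_eqF.
rewrite normrM (gtr0_norm Mm_gt0) -mulrA ler_pM2l //.
apply: le_trans (_ : _ <= 1 / (n%:R - 1)) _.
  apply: ler_dist_divr => //; rewrite divfK ?gt_eqF // ler_distl.
  by have /andP[] := maximizer_s_between; lra.
have n_ge3 : 3 <= n%:R :> R by rewrite ler_nat.
by rewrite ler_pdivrMr // mulrAC ler_pdivlMr //; lra.
Qed.

Lemma maximizer_r_ratio : 0 < excess m M n s ->
  `|r%:R / n%:R - s%:R / n%:R * expR (- (excess m M n s / M))| <= 1 / n%:R.
Proof.
move=> X_gt0; have r_lt_s := maximizer_lt_of_excess_gt0 X_gt0.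
apply: ler_dist_divr => //; rewrite divfK ?gt_eqF // mulrAC divfK ?gt_eqF //.
have eK : expR (excess m M n s / M) * expR (- (excess m M n s / M)) = 1.
  exact: expRxMexpNx_1.
have := ler_wpM2r (expR_ge0 (- (excess m M n s / M))) maximizer_r_upper.
have := ler_wpM2r (expR_ge0 (- (excess m M n s / M))) (maximizer_r_lower r_lt_s).
rewrite -!mulrA eK !mulr1 [(s%:R - 1) * _]mulrBl mul1r ler_distl.
by have := expR_ge0 (- (excess m M n s / M)); lra.
Qed.

Lemma maximizer_value_ratio : 0 < excess m M n s ->
  `|EBWU m M n r s - M * (r%:R / n%:R)| <= M / n%:R.
Proof.
move=> X_gt0; have r_lt_s := maximizer_lt_of_excess_gt0 X_gt0.
apply: ler_dist_divr => //; rewrite -mulrA divfK ?gt_eqF // mulrC ler_distl.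
by have /andP[] := maximizer_value r_lt_s; lra.
Qed.

End Maximizer.

Section Asymptotics.
Context {R : realType} {m M : R} {M1 M2 : nat -> nat}.
Hypotheses (m_ge0 : 0 <= m) (m_lt_M : m < M)
  (max12 : forall n, (2 < n)%N -> is_maximizer m M n (M1 n) (M2 n)).

Lemma cvg_M2_ratio : (fun n => (M2 n)%:R / n%:R : R) @ \oo --> M / (M + m).
Proof.
apply: (cvg_dist_invn 1) (cvg_cst _).
apply: filterS (nbhs_infty_gt 2) => n n_gt2.
exact: (maximizer_s_ratio m_ge0 m_lt_M n_gt2 (max12 n n_gt2)).
Qed.

Lemma cvg_excess : (fun n => excess m M n (M2 n)) @ \oo --> M - m.
Proof.
apply: (cvg_dist_invn ((M + m) * 2)) (cvg_cst _).
apply: filterS (nbhs_infty_gt 2) => n n_gt2.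
exact: (maximizer_excess_dist m_ge0 m_lt_M n_gt2 (max12 n n_gt2)).
Qed.

Lemma cvg_M1_ratio : (fun n => (M1 n)%:R / n%:R : R) @ \oo
  --> M / (M + m) * expR (- ((M - m) / M)).
Proof.
have X_gt0 : \forall n \near \oo, 0 < excess m M n (M2 n).
  by apply: (cvgr_gt (M - m) cvg_excess); rewrite subr_gt0.
apply: (cvg_dist_invn 1
  (v := fun n => (M2 n)%:R / n%:R * expR (- (excess m M n (M2 n) / M)))).
  apply: filterS2 (nbhs_infty_gt 2) X_gt0 => n n_gt2.
  exact: (maximizer_r_ratio m_ge0 m_lt_M n_gt2 (max12 n n_gt2)).
apply: cvgM cvg_M2_ratio _; apply: (continuous_cvg _ (@continuous_expR R _)).
by apply: cvgN; apply: cvgM cvg_excess (cvg_cst _).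
Qed.

Lemma cvg_EBWU_maximizer : (fun n => EBWU m M n (M1 n) (M2 n)) @ \oo
  --> M * (M / (M + m) * expR (- ((M - m) / M))).
Proof.
have X_gt0 : \forall n \near \oo, 0 < excess m M n (M2 n).
  by apply: (cvgr_gt (M - m) cvg_excess); rewrite subr_gt0.
apply: (cvg_dist_invn M (v := fun n => M * ((M1 n)%:R / n%:R))).
  apply: filterS2 (nbhs_infty_gt 2) X_gt0 => n n_gt2.
  exact: (maximizer_value_ratio m_ge0 m_lt_M n_gt2 (max12 n n_gt2)).
exact: cvgM (cvg_cst M) cvg_M1_ratio.
Qed.

End Asymptotics.

Theorem theorem6 (R : realType) (m M : R) (M1 M2 : nat -> nat) :
  0 <= m -> m < M ->
  (forall n : nat, (2 < n)%N -> is_maximizer m M n (M1 n) (M2 n)) ->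
  [/\ (fun n : nat => (M1 n)%:R / n%:R : R) @ \oo
        --> expR (-1 + m / M) * M / (m + M),
      (fun n : nat => (M2 n)%:R / n%:R : R) @ \oo --> M / (m + M)
    & (fun n : nat => EBWU m M n (M1 n) (M2 n)) @ \oo
        --> expR (-1 + m / M) * M ^+ 2 / (m + M)].
Proof.
move=> m_ge0 m_lt_M max12.
have M_neq0 : M != 0 by rewrite gt_eqF // (le_lt_trans m_ge0).
have M1_limit : M / (M + m) * expR (- ((M - m) / M))
    = expR (-1 + m / M) * M / (m + M).
  by rewrite addrC mulrC mulrA; congr (expR _ * _ / _); field.
split.
- by rewrite -M1_limit; exact: (cvg_M1_ratio m_ge0 m_lt_M max12).
- by rewrite addrC; exact: (cvg_M2_ratio m_ge0 m_lt_M max12).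
- have -> : expR (-1 + m / M) * M ^+ 2 / (m + M)
      = M * (expR (-1 + m / M) * M / (m + M)) by ring.
  by rewrite -M1_limit; exact: (cvg_EBWU_maximizer m_ge0 m_lt_M max12).
Qed.
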